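(* Let $k$ be a field, $R = k[x_1,\dots,x_n]$ and $I =(x_1^{a_1},\dots,x_n^{a_n}, x_1^{p_1}\cdots x_n^{p_n})$ where $0 \leq p_i < a_i$ for all $i$. Then $R/I$ has a symmetric Hilbert series if and only if there is an integer $N$ such that, after a possible relabeling of the variables, $p_i=0$ for $i>N$, $p_i\neq 0$ for $i\leq N$, and \[ (a_1,a_2,\dots,a_N) = (a_1,\ a_1+p_2,\ \dots,\ a_1+p_2+\dots+p_N). \]
   Context: For a graded Artinian algebra with Hilbert function $h_i=\dim_k (R/I)_i$, nonzero exactly for $p\leq i\leq q$ ($h_p,h_q\neq 0$), the Hilbert series $\sum_i h_it^i$ is symmetric if $h_{p+i}=h_{q-i}$ for all $i$. *)

From mathcomp Require Import all_boot all_order.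
From mathcomp Require Import perm.
Set Implicit Arguments. Unset Strict Implicit. Unset Printing Implicit Defensive.

(* Monomials of k[x_0,...,x_{n-1}] are exponent vectors e : 'I_n -> nat.
   For I = (x_i^{a_i} (all i), x^p) a monomial ideal, a monomial x^e lies in I
   iff it is divisible by one of the generators.  The k-vector space (R/I)_d
   has as basis the degree-d monomials not in I (standard monomials), so
   h_d = dim_k (R/I)_d is the number of exponent vectors e with |e| = d,
   e_i < a_i for all i, and not (p <= e componentwise).
   Every entry of such an e is <= d, hence e ranges over {ffun 'I_n -> 'I_d.+1}. *)
Definition hilb (n : nat) (a p : 'I_n -> nat) (d : nat) : nat :=
  #|[set e : {ffun 'I_n -> 'I_d.+1} |
      [&& (\sum_(i < n) (e i : nat) == d),
          [forall i, (e i : nat) < a i] &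
          ~~ [forall i, p i <= e i]] ]|.

(* Symmetric Hilbert series: h is nonzero exactly on [lo, hi] and
   h_(lo+i) = h_(hi-i); the zero series (R/I = 0) is regarded as symmetric. *)
Definition symmetric_hilb (h : nat -> nat) : Prop :=
  (forall d, h d = 0) \/
  exists lo hi, lo <= hi /\ (forall d, h d != 0 <-> lo <= d <= hi) /\
    (forall i, i <= hi - lo -> h (lo + i) = h (hi - i)).

From mathcomp Require Import all_boot all_order perm.
From mathcomp Require Import all_algebra zify ring.
Set Implicit Arguments. Unset Strict Implicit. Unset Printing Implicit Defensive.

(* Let A = prod_i (1 + X + ... + X^(a_i - 1)), B the same product for the
   exponents a_i - p_i, and P = sum_i p_i. The Hilbert series of R/I is
   H = A - X^P B, and A, B are palindromic of degrees D = sum_i (a_i - 1) and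
   D - P, so the reciprocal of H in degree D is A - B. Hence H is symmetric
   (with socle degree D - c) iff A - B = X^c H, i.e. iff
   A (1 - X^c) = B (1 - X^(c + P)). After multiplication by (1 - X)^n both
   sides are products of factors 1 - X^m, whose multisets of exponents are then
   equal by unique factorization: {c, a_1, ..., a_n} = {c + P, a_1 - p_1, ...,
   a_n - p_n}. Cancelling the indices with p_i = 0, this multiset identity
   holds iff the other indices can be ordered so that a_(i_1) - p_(i_1) = c
   and a_(i_k) - p_(i_k) = a_(i_(k-1)), which is the stated condition with
   c = a_1 - p_1. *)

(** * Hilbert functions *)

Lemma symmetric_hilbP (h : nat -> nat) : h 0 != 0 -> (forall d, h d.+1 != 0 -> h d != 0) ->
  symmetric_hilb h <-> exists hi, forall k, h k = if k <= hi then h (hi - k) else 0.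
Proof.
move=> h0 hS; have h_down d k : k <= d -> h d != 0 -> h k != 0.
  elim: d => [|d IH]; first by rewrite leqn0 => /eqP ->.
  by rewrite leq_eqVlt => /orP [/eqP -> // | kd /hS]; apply: IH.
split => [[h_eq0 | [lo [hi [_ [hnz hs]]]]] | [hi hE]].
- by move: h0; rewrite h_eq0.
- have lo0 : lo = 0 by have := proj1 (hnz 0) h0; lia.
  subst lo; exists hi => k; case: leqP => khi; first by have := hs k; rewrite add0n subn0; apply.
  by apply/eqP; apply: contraTT khi => /hnz; lia.
- right; exists 0, hi; split => //; split => [k | i]; last first.
    by rewrite add0n subn0 => ihi; rewrite hE ihi.
  split => [| /andP [_ khi]]; first by case: leqP (hE k) => // _ ->; rewrite eqxx.
  by apply: (h_down hi) => //; rewrite hE leqnn subnn.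
Qed.

(* Lowering a positive exponent of a standard monomial keeps it standard. *)
Lemma hilb_pred_neq0 n (a p : 'I_n -> nat) d : hilb a p d.+1 != 0 -> hilb a p d != 0.
Proof.
rewrite /hilb -!lt0n !card_gt0 => /set0Pn [e]; rewrite inE => /and3P [/eqP se ea pe].
have /forallPn [i /= ei] : ~~ [forall (i | true), e i == 0 :> nat] by rewrite -sum_nat_eq0 se.
pose f j := e j - (j == i).
have sf : \sum_(j < n) f j = d.
  rewrite (bigD1 i) //= {1}/f eqxx; under eq_bigr => j /negbTE ji do rewrite /f ji subn0.
  by move: se; rewrite (bigD1 i) //=; lia.
have fd j : f j <= d by rewrite -sf (bigD1 j) //= leq_addr.
have fE j : ([ffun j => inord (f j)] : {ffun 'I_n -> 'I_d.+1}) j = f j :> nat.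
  by rewrite ffunE inordK // ltnS fd.
apply/set0Pn; exists [ffun j => inord (f j)]; rewrite inE; apply/and3P; split.
- by apply/eqP; under eq_bigr do rewrite fE.
- by apply/forallP => j; rewrite fE; apply: leq_ltn_trans (leq_subr _ _) (forallP ea j).
- apply: contra pe => /forallP pf; apply/forallP => j.
  by apply: leq_trans (pf j) _; rewrite fE leq_subr.
Qed.

(** * Chains *)

Section Chains.
Variables (T : eqType) (a p : T -> nat).

(* Equivalently a (l_0) - p (l_0) = c and a (l_k) - p (l_k) = a (l_(k-1)). *)
Definition chain (c : nat) (l : seq T) :=
  forall k, k < size l -> nth 0 (map a l) k = c + sumn (take k.+1 (map p l)).

Lemma chain_rcons c l j :
  chain c (rcons l j) <-> chain c l /\ a j = c + sumn (map p l) + p j.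
Proof.
have last_nth (f : T -> nat) : nth 0 (map f (rcons l j)) (size l) = f j.
  by rewrite map_rcons nth_rcons size_map ltnn eqxx.
have nthl (f : T -> nat) k : k < size l -> nth 0 (map f (rcons l j)) k = nth 0 (map f l) k.
  by move=> kl; rewrite map_rcons nth_rcons size_map kl.
have takel k : k < size l -> take k.+1 (map p (rcons l j)) = take k.+1 (map p l).
  by move=> kl; rewrite map_rcons -cats1 takel_cat // size_map.
have take_all : take (size l).+1 (map p (rcons l j)) = rcons (map p l) (p j).
  by rewrite take_oversize map_rcons // size_rcons size_map.
rewrite /chain size_rcons; split => [ch | [ch aj] k].
  split => [k kl | ]; first by rewrite -nthl // -takel //; apply: ch; rewrite ltnS ltnW.
  by have := ch (size l) (ltnSn _); rewrite last_nth take_all sumn_rcons addnA.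
rewrite ltnS leq_eqVlt => /orP [/eqP -> | kl]; last by rewrite nthl // takel // ch.
by rewrite last_nth take_all sumn_rcons addnA.
Qed.

(* The multiset identity {c} + a(s) = {c + sum p(s)} + (a - p)(s), to which
   unique factorization reduces A (1 - X^c) = B (1 - X^(c + P)). *)
Definition balanced (c : nat) (s : seq T) :=
  perm_eq (c :: map a s) ((c + sumn (map p s)) :: map (fun i => a i - p i) s).

Lemma balanced_perm c s t : perm_eq s t -> balanced c s = balanced c t.
Proof.
move=> st; rewrite /balanced (perm_sumn (perm_map p st)).
have perm_cons_map (f : T -> nat) x : perm_eq (x :: map f s) (x :: map f t).
  by rewrite perm_cons perm_map.
by rewrite (permPl (perm_cons_map _ _)) (permPr (perm_cons_map _ _)).
Qed.

Lemma balanced_cat_zero c s z : all (fun i => p i == 0) z -> balanced c (s ++ z) = balanced c s.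
Proof.
move=> z0; have pz : map p z = nseq (size z) 0.
  by elim: z z0 => //= i z IH /andP [/eqP -> /IH ->].
have az : map (fun i => a i - p i) z = map a z.
  by apply/eq_in_map => i /(allP z0) /eqP ->; rewrite subn0.
by rewrite /balanced !map_cat sumn_cat pz sumn_nseq addn0 -!cat_cons az perm_cat2r.
Qed.

Lemma chain_balanced c l : chain c l -> balanced c l.
Proof.
rewrite /balanced; elim/last_ind: l => [|l j IH]; first by rewrite addn0.
move=> /chain_rcons [/IH perm_l aj].
rewrite !map_rcons sumn_rcons addnA -aj (_ : a j - p j = c + sumn (map p l)); last by lia.
by rewrite -rcons_cons perm_rcons perm_cons perm_sym perm_rcons perm_sym.
Qed.

Lemma balanced_chain c s : all (fun i => 0 < p i) s -> balanced c s ->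
  exists2 l, perm_eq l s & chain c l.
Proof.
have [m] := ubnP (size s); elim: m s => // m IH [_ _ _| t s0]; first by exists [::].
set s := t :: s0 => sm ps pe.
(* The largest value c + sum p(s) on the right must be some a j, and j ends the chain. *)
have /mapP [j js aj] : c + sumn (map p s) \in map a s.
  move: (perm_mem pe (c + sumn (map p s))); rewrite !inE eqxx /= => /orP [/eqP|] //.
  by move: ps => /= /andP [pt _]; lia.
have s_rem := perm_to_rem js; set s' := rem j s in s_rem.
have sum_s : sumn (map p s) = p j + sumn (map p s') by rewrite (perm_sumn (perm_map p s_rem)).
have [l' perm_l' ch_l'] : exists2 l', perm_eq l' s' & chain c l'.
  apply: IH; first by move: sm; rewrite (perm_size s_rem) /=; lia.
    by apply/allP => i /mem_rem /(allP ps).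
  rewrite /balanced (_ : c + sumn (map p s') = a j - p j); last by lia.
  rewrite -(perm_cons (a j)); apply: perm_trans (perm_trans _ pe) _.
    by rewrite (perm_catCA [:: a j] [:: c]) perm_cons perm_sym; exact: (perm_map a s_rem).
  by rewrite aj perm_cons; exact: (perm_map (fun i => a i - p i) s_rem).
exists (rcons l' j); first by rewrite perm_rcons (permPr s_rem) perm_cons.
apply/chain_rcons; split => //.
by rewrite (perm_sumn (perm_map p perm_l')) -aj sum_s addnAC addnA.
Qed.

Lemma balancedP c s : all (fun i => 0 < p i) s ->
  balanced c s <-> exists2 l, perm_eq l s & chain c l.
Proof.
move=> ps; split; first exact: balanced_chain.
by move=> [l ls /chain_balanced]; rewrite (balanced_perm _ ls).
Qed.

End Chains.

Lemma take_enum_ord n m : take m (enum 'I_n) = [seq i : 'I_n <- enum 'I_n | i < m].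
Proof.
by rewrite takeEmask mask_enum_ord; apply: eq_filter => i; rewrite nth_nseq; case: ltnP.
Qed.

Lemma perm_eq_enumP n (L : seq 'I_n) :
  perm_eq L (enum 'I_n) <-> exists s : 'S_n, L = map s (enum 'I_n).
Proof.
have map_tnth (s : 'S_n) : [tuple tnth (ord_tuple n) (s i) | i < n] = map s (enum 'I_n) :> seq _.
  by apply: eq_map => i; rewrite tnth_ord_tuple.
split => [/(@tuple_permP _ _ _ (ord_tuple n)) [s ->] | [s ->]]; first by exists s.
by apply/(@tuple_permP _ _ _ (ord_tuple n)); exists s; rewrite map_tnth.
Qed.

Lemma sum_ord_le_split n (F : 'I_n -> nat) (i0 j : 'I_n) : i0 = 0 :> nat ->
  \sum_(k < n | k <= j) F k = F i0 + \sum_(k < n | 0 < k <= j) F k.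
Proof.
move=> i00; rewrite (bigD1 i0) ?i00 //=; congr (_ + _); apply: eq_bigl => k.
by rewrite -val_eqE /= i00 lt0n andbC.
Qed.

Section Permutations.
Variables (n : nat) (a p : 'I_n -> nat).

Lemma chain_map_permP (s : 'S_n) N c :
  chain a p c (map s [seq i : 'I_n <- enum 'I_n | i < N]) <->
  forall j : 'I_n, j < N -> a (s j) = c + \sum_(k < n | k <= j) p (s k).
Proof.
rewrite -take_enum_ord /chain size_map size_take size_enum_ord.
have nth_a (j : 'I_n) : j < N -> nth 0 (map a (map s (take N (enum 'I_n)))) j = a (s j).
  move=> jN; rewrite -map_comp map_take nth_take // (nth_map j) ?size_enum_ord //.
  by rewrite nth_ord_enum.
have sum_p (j : 'I_n) : j < N ->
    sumn (take j.+1 (map p (map s (take N (enum 'I_n))))) = \sum_(k < n | k <= j) p (s k).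
  move=> jN; rewrite -map_comp map_take take_takel // -map_take take_enum_ord.
  by rewrite sumnE big_map big_filter big_enum_cond.
split => [ch j jN | ch k kN].
  by rewrite -nth_a // -sum_p // ch //; case: ifP.
have [kn kN'] : k < n /\ k < N by move: kN; case: (ltnP N n); lia.
by rewrite (nth_a (Ordinal kn)) // (sum_p (Ordinal kn)) // ch.
Qed.

Lemma balanced_enumP c : balanced a p c (enum 'I_n) <->
  exists2 l, perm_eq l [seq i <- enum 'I_n | 0 < p i] & chain a p c l.
Proof.
rewrite -(balanced_perm _ _ _ (permEl (perm_filterC (fun i => 0 < p i) _))).
rewrite balanced_cat_zero; first exact/balancedP/filter_all.
by apply/allP => i; rewrite mem_filter /= -eqn0Ngt => /andP [].
Qed.

Lemma permutation_of_chain c l :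
  perm_eq l [seq i <- enum 'I_n | 0 < p i] -> chain a p c l ->
  exists (s : 'S_n) (N : nat), N <= n /\
    (forall i : 'I_n, p (s i) = 0 <-> N <= i) /\
    (forall i0 j : 'I_n, (i0 : nat) = 0 -> j < N ->
       a (s j) = a (s i0) + \sum_(k < n | 0 < k <= j) p (s k)).
Proof.
set S := [seq i <- enum 'I_n | 0 < p i] => lS ch.
set Z := [seq i <- enum 'I_n | predC (fun i => 0 < p i) i].
have /perm_eq_enumP [s Ls] : perm_eq (l ++ Z) (enum 'I_n).
  by rewrite -(permPr (permEl (perm_filterC (fun i => 0 < p i) _))) perm_cat2r.
have sE (i : 'I_n) : s i = nth i (l ++ Z) i.
  by rewrite Ls (nth_map i) ?size_enum_ord // nth_ord_enum.
have /chain_map_permP chs : chain a p c (map s [seq i : 'I_n <- enum 'I_n | i < size l]).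
  by rewrite -take_enum_ord map_take -Ls take_size_cat.
exists s, (size l); split; [|split].
- rewrite (perm_size lS) size_filter; apply: leq_trans (count_size _ _) _.
  by rewrite size_enum_ord.
- move=> i; rewrite sE nth_cat; case: ltnP => il.
    have : nth i l i \in S by rewrite -(perm_mem lS) mem_nth.
    by rewrite mem_filter => /andP [pi _]; split => // p0; rewrite p0 in pi.
  have : nth i Z (i - size l) \in Z.
    by apply: mem_nth; rewrite ltn_subLR // -size_cat Ls size_map size_enum_ord.
  by rewrite mem_filter /= -leqNgt leqn0 => /andP [/eqP ->].
- move=> i0 j i00 jl.
  have a_i0 : a (s i0) = c + p (s i0).
    rewrite chs ?i00; last by lia.
    by rewrite (big_pred1 i0) // => k; rewrite /= -val_eqE /= i00 leqn0.
  by rewrite chs // (sum_ord_le_split _ _ i00) a_i0 addnA.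
Qed.

Lemma chain_of_permutation (s : 'S_n) N : (forall i, p i < a i) -> N <= n ->
  (forall i : 'I_n, p (s i) = 0 <-> N <= i) ->
  (forall i0 j : 'I_n, (i0 : nat) = 0 -> j < N ->
     a (s j) = a (s i0) + \sum_(k < n | 0 < k <= j) p (s k)) ->
  exists2 c, 0 < c & exists2 l, perm_eq l [seq i <- enum 'I_n | 0 < p i] & chain a p c l.
Proof.
move=> hpa Nn ps sum_s; set l := map s [seq i : 'I_n <- enum 'I_n | i < N].
have psE (i : 'I_n) : (0 < p (s i)) = (i < N).
  by rewrite lt0n ltnNge; congr negb; apply/eqP/idP => /ps.
have perm_l : perm_eq l [seq i <- enum 'I_n | 0 < p i].
  have /perm_eq_enumP : exists s' : 'S_n, map s (enum 'I_n) = map s' (enum 'I_n) by exists s.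
  by rewrite /l -(eq_filter psE) -(filter_map s (fun i => 0 < p i)); apply: perm_filter.
case: (posnP N) => [N0 | N_gt0].
  by exists 1 => //; exists l => //; apply/chain_map_permP => j; rewrite N0.
pose i0 : 'I_n := Ordinal (leq_trans N_gt0 Nn).
exists (a (s i0) - p (s i0)); first by rewrite subn_gt0.
exists l => //; apply/chain_map_permP => j jN.
by rewrite (sum_ord_le_split _ _ (erefl : i0 = 0 :> nat)) (sum_s i0) // addnA subnK // ltnW.
Qed.

End Permutations.

Import GRing.Theory Num.Theory.
Local Open Scope ring_scope.

(** * Reciprocal polynomials *)

Section Reciprocal.
Variable R : nzRingType.
Implicit Types f g : {poly R}.

(* X^D f(1/X) when size f <= D.+1; coefficients of f above degree D are dropped. *)
Definition recip (D : nat) f : {poly R} := \poly_(j < D.+1) f`_(D - j).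

Lemma coef_recip D f j : (recip D f)`_j = if (j <= D)%N then f`_(D - j) else 0.
Proof. by rewrite coef_poly ltnS. Qed.

Lemma size_recip D f : (size (recip D f) <= D.+1)%N.
Proof. exact: size_poly. Qed.

Lemma recipB D f g : recip D (f - g) = recip D f - recip D g.
Proof. by apply/polyP => j; rewrite coefB !coef_recip coefB; case: ifP; rewrite ?subr0. Qed.

Lemma recipXnM P D g : recip (P + D) ('X^P * g) = recip D g.
Proof.
apply/polyP => j; rewrite !coef_recip coefXnM.
by repeat (case: ifP; intro); first [done | exfalso; lia | congr g`_ _; lia].
Qed.

Lemma recip_widen c D f : (size f <= D.+1)%N -> recip (c + D) f = 'X^c * recip D f.
Proof.
move=> sf; apply/polyP => j; rewrite coefXnM !coef_recip.
by repeat (case: ifP; intro);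
  first [done | exfalso; lia | congr f`_ _; lia | rewrite nth_default // (leq_trans sf); lia].
Qed.

Lemma coefM_bounded E F f g m : (size f <= E.+1)%N -> (size g <= F.+1)%N ->
  (f * g)`_m = \sum_(i < E.+1) \sum_(k < F.+1 | (i + k == m)%N) f`_i * g`_k.
Proof.
move=> sf sg; rewrite coefM.
have -> : \sum_(i < m.+1) f`_i * g`_(m - i) =
          \sum_(i < (m + E).+1 | (i <= m)%N) f`_i * g`_(m - i).
  by rewrite (big_ord_widen (m + E).+1 (fun i => f`_i * g`_(m - i))) //; lia.
rewrite [RHS](big_ord_widen (m + E).+1
  (fun i => \sum_(k < F.+1 | (i + k == m)%N) f`_i * g`_k)) ?ltnS ?leq_addl //.
rewrite big_mkcond [RHS]big_mkcond; apply: eq_bigr => i _ /=.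
rewrite (eq_bigl (fun k : 'I_F.+1 => (i <= m)%N && (k == (m - i)%N :> nat))); last by move=> k; lia.
rewrite (big_ord1_cond_eq _ (fun k => f`_i * g`_k) (fun=> (i <= m)%N)).
case: (leqP i m) => im; last by rewrite andbF if_same.
case: (ltnP i E.+1) => iE; last by rewrite nth_default ?mul0r //; exact: leq_trans sf _.
rewrite andbT; case: ltnP => // Fmi.
by rewrite [g`_ _]nth_default ?mulr0 //; exact: leq_trans sg _.
Qed.

Lemma recipM E F f g : (size f <= E.+1)%N -> (size g <= F.+1)%N ->
  recip (E + F) (f * g) = recip E f * recip F g.
Proof.
move=> sf sg; apply/polyP => j; rewrite coef_recip.
case: leqP => jEF; last first.
  rewrite nth_default //; apply: leq_trans (size_polyMleq _ _) _.
  by have := size_recip E f; have := size_recip F g; lia.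
rewrite (coefM_bounded _ sf sg) (coefM_bounded _ (size_recip E f) (size_recip F g)).
rewrite (reindex_inj rev_ord_inj); apply: eq_bigr => i _.
rewrite (reindex_inj rev_ord_inj); apply: eq_big => [k | k _] /=.
  by have := ltn_ord i; have := ltn_ord k; lia.
by rewrite !coef_recip !leq_ord !subSS.
Qed.

Lemma recip_shift_leq D c f : f != 0 -> recip D f = 'X^c * f -> (c <= D)%N.
Proof.
move=> f0 Ef; have := size_recip D f; rewrite Ef size_monicM ?monicXn // size_polyXn.
by rewrite -size_poly_gt0 in f0; lia.
Qed.

Lemma recip_shift D hi f : (hi <= D)%N -> (size f <= D.+1)%N ->
  f = recip hi f <-> recip D f = 'X^(D - hi) * f.
Proof.
move=> hiD sf; split => [fE | Ef].
  by rewrite -{1}(subnK hiD) recip_widen -?fE // fE size_recip.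
have sf' : (size f <= hi.+1)%N.
  have [->|f0] := eqVneq f 0; first by rewrite size_poly0.
  have := size_recip D f; rewrite Ef size_monicM ?monicXn // size_polyXn.
  by rewrite -size_poly_gt0 in f0; lia.
apply: (monic_lreg (monicXn R (D - hi))).
by rewrite -recip_widen // subnK.
Qed.

Lemma recip_prod I (r : seq I) (F : I -> {poly R}) (d : I -> nat) :
  (forall i, (size (F i) <= (d i).+1)%N /\ recip (d i) (F i) = F i) ->
  (size (\prod_(i <- r) F i)%R <= (\sum_(i <- r) d i).+1)%N /\
  recip (\sum_(i <- r) d i)%N (\prod_(i <- r) F i) = \prod_(i <- r) F i.
Proof.
move=> Fd; elim: r => [|i r [sP rP]].
  rewrite !big_nil size_poly1; split => //; apply/polyP => j.
  by rewrite coef_recip !coef1; case: j.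
have [sF rF] := Fd i; rewrite !big_cons; split; last by rewrite recipM // rF rP.
by apply: leq_trans (size_polyMleq _ _) _; lia.
Qed.

End Reciprocal.

(** * Hilbert series *)

Definition geom (m : nat) : {poly int} := \poly_(k < m) 1.

Lemma coef_geom m j : (geom m)`_j = (j < m)%:R.
Proof. by rewrite coef_poly; case: ltnP. Qed.

Lemma recip_geom m : recip m.-1 (geom m) = geom m.
Proof.
apply/polyP => j; rewrite coef_recip !coef_geom.
case: ifP => jm; last by case: ltnP => //; lia.
by case: m jm => [|m] jm; rewrite ?ltn0 // !ltnS leq_subr jm.
Qed.

Lemma one_sub_Xn_geom m : 1 - 'X^m = (1 - 'X) * geom m.
Proof.
rewrite /geom poly_def; under eq_bigr do rewrite scale1r.
by rewrite -opprB subrX1 -mulNr opprB.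
Qed.

(* The Hilbert series of k[x_1, ..., x_n]/(x_i^(m_i)) and its socle degree. *)
Definition ci_series n (m : 'I_n -> nat) : {poly int} := \prod_(i < n) geom (m i).

Definition ci_deg n (m : 'I_n -> nat) : nat := (\sum_(i < n) (m i).-1)%N.

Lemma recip_ci_series n (m : 'I_n -> nat) :
  (size (ci_series m) <= (ci_deg m).+1)%N /\ recip (ci_deg m) (ci_series m) = ci_series m.
Proof.
apply: recip_prod => i; split; last exact: recip_geom.
by apply: leq_trans (size_poly _ _) _; lia.
Qed.

Lemma ci_series_coef0 n (m : 'I_n -> nat) : (forall i, 0 < m i)%N -> (ci_series m)`_0 = 1.
Proof.
move=> m_gt0; rewrite -horner_coef0 horner_prod big1 // => i _.
by rewrite horner_coef0 coef_geom m_gt0.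
Qed.

(* The monomials below every x_i^(a_i), minus the multiples of x^p among them. *)
Definition hilb_poly n (a p : 'I_n -> nat) : {poly int} :=
  ci_series a - 'X^(\sum_(i < n) p i)%N * ci_series (fun i => (a i - p i)%N).

Lemma coef_prod_sumXn n d (F : 'I_n -> pred nat) :
  (\prod_(i < n) \sum_(x < d.+1 | F i x) 'X^x : {poly int})`_d =
  \sum_(e : {ffun 'I_n -> 'I_d.+1}) ((\sum_(i < n) (e i : nat) == d)%N && [forall i, F i (e i)])%:R.
Proof.
under eq_bigr do rewrite big_mkcond /=.
rewrite bigA_distr_bigA coef_sum; apply: eq_bigr => e _.
case: (boolP [forall i, F i (e i)]) => [/forallP Fe | /forallPn [i Fei]].
  by rewrite (eq_bigr (fun i => 'X^(e i))) => [|i _]; rewrite ?Fe // prodrXr coefXn eq_sym andbT.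
by rewrite (bigD1 i) //= (negbTE Fei) mul0r coef0 andbF.
Qed.

Lemma coef_prod_eq_low n d (G K : 'I_n -> {poly int}) :
  (forall i j, (j <= d)%N -> (G i)`_j = (K i)`_j) ->
  (\prod_(i < n) G i)`_d = (\prod_(i < n) K i)`_d.
Proof.
move=> GK; suff : forall j, (j <= d)%N -> (\prod_(i < n) G i)`_j = (\prod_(i < n) K i)`_j.
  by apply.
apply: (big_ind2 (fun f g : {poly int} => forall j, (j <= d)%N -> f`_j = g`_j)) => //.
  move=> f1 g1 f2 g2 fg1 fg2 j jd; rewrite !coefM; apply: eq_bigr => k _.
  by rewrite fg1 ?fg2 //; have := ltn_ord k; lia.
by move=> i _; apply: GK.
Qed.

Lemma sumXn_cond_poly m (F : pred nat) :
  \sum_(x < m | F x) 'X^x = \poly_(x < m) (F x)%:R :> {poly int}.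
Proof.
rewrite poly_def big_mkcond; apply: eq_bigr => x _.
by case: (F x); rewrite ?scale1r ?scale0r.
Qed.

Lemma hilb_polyE n (a p : 'I_n -> nat) d : (hilb a p d)%:R = (hilb_poly a p)`_d.
Proof.
(* The exponent vectors of degree d have entries <= d, so truncating the
   geometric series at degree d does not change the coefficient of X^d. *)
have -> : (hilb a p d)%:R =
    (\prod_(i < n) \sum_(x < d.+1 | (x < a i)%N) 'X^x : {poly int})`_d -
    (\prod_(i < n) \sum_(x < d.+1 | (p i <= x < a i)%N) 'X^x : {poly int})`_d.
  rewrite (coef_prod_sumXn d (fun i x => x < a i)%N).
  rewrite (coef_prod_sumXn d (fun i x => p i <= x < a i)%N) /hilb -sum1_card natr_sum.
  rewrite big_mkcond -sumrB.
  apply: eq_bigr => e _.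
  have -> : [forall i, p i <= e i < a i]%N = [forall i, p i <= e i]%N && [forall i, e i < a i]%N.
    apply/forallP/andP => [pea | [/forallP pe /forallP ea] i]; last by rewrite pe ea.
    by split; apply/forallP => i; case/andP: (pea i).
  rewrite inE; case: (\sum_(i < n) (e i : nat) == d)%N; case: [forall i, e i < a i]%N;
    by case: [forall i, p i <= e i]%N; rewrite /= ?subr0 ?subrr.
rewrite /hilb_poly /ci_series coefB -prodrXr -big_split /=.
congr (_ - _); apply: coef_prod_eq_low => i j jd.
  by rewrite (sumXn_cond_poly _ (fun x => x < a i)%N) coef_poly ltnS jd coef_geom.
rewrite (sumXn_cond_poly _ (fun x => p i <= x < a i)%N) coef_poly ltnS jd.
rewrite coefXnM coef_geom.
by case: (ltnP j (p i)) => // pj; rewrite ltn_sub2rE.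
Qed.

Lemma coef0_prod_one_sub_Xn (S : seq nat) :
  all (leq 1) S -> (\prod_(x <- S) (1 - 'X^x) : {poly int})`_0 = 1.
Proof.
move=> S1; rewrite -horner_coef0 horner_prod big1_seq // => x /andP [_ /(allP S1) x1].
by rewrite !hornerE expr0n; case: x x1.
Qed.

Lemma coef_prod_one_sub_Xn (S : seq nat) m : (0 < m)%N -> all (leq m) S ->
  (\prod_(x <- S) (1 - 'X^x) : {poly int})`_m = - (count_mem m S)%:R.
Proof.
move=> m0; elim: S => [|x S IH]; first by rewrite big_nil coef1 gtn_eqF // oppr0.
move=> /= /andP [mx Sm]; rewrite big_cons mulrBl mul1r coefB coefXnM IH //.
move: mx; rewrite leq_eqVlt => /orP [/eqP <- | mx]; last by rewrite mx subr0 gtn_eqF.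
rewrite ltnn subnn eqxx coef0_prod_one_sub_Xn; last by apply/allP => y /(allP Sm); lia.
by rewrite natrD opprD addrC.
Qed.

Lemma perm_eq_prod_one_sub_Xn (S T : seq nat) : all (leq 1) S -> all (leq 1) T ->
  \prod_(x <- S) (1 - 'X^x) = \prod_(x <- T) (1 - 'X^x) :> {poly int} -> perm_eq S T.
Proof.
(* By strong induction on m: the factors with exponent < m agree and cancel,
   and the coefficient of X^m in the rest is minus the multiplicity of m. *)
move=> S1 T1 eqST; apply/allP => m _ /=; apply/eqP; elim/ltn_ind: m => m IHm.
have [-> | m0] := posnP m.
  have no0 s : all (leq 1) s -> count_mem 0 s = 0%N.
    by move=> s1; apply/count_memPn/negP => /(allP s1).
  by rewrite !no0.
have cnt_lt s x : count_mem x [seq y <- s | (y < m)%N] = if (x < m)%N then count_mem x s else 0%N.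
  rewrite count_filter; case: ltnP => xm.
    by apply: eq_count => y /=; case: eqP => // ->; rewrite xm.
  rewrite (eq_count (a2 := pred0)) ?count_pred0 // => y /=.
  by case: eqP => // ->; rewrite ltnNge xm.
have low : perm_eq [seq y <- S | (y < m)%N] [seq y <- T | (y < m)%N].
  by apply/allP => x _ /=; rewrite !cnt_lt; case: ifP => // /IHm ->.
have low_prod : \prod_(x <- S | (x < m)%N) (1 - 'X^x) =
                 \prod_(x <- T | (x < m)%N) (1 - 'X^x) :> {poly int}.
  by rewrite -big_filter (perm_big _ low) big_filter.
have high : \prod_(x <- S | ~~ (x < m)%N) (1 - 'X^x) =
             \prod_(x <- T | ~~ (x < m)%N) (1 - 'X^x) :> {poly int}.
  move: eqST; rewrite (bigID (fun x => x < m)%N) [RHS](bigID (fun x => x < m)%N) /= low_prod.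
  apply: mulfI; apply/eqP => /(congr1 (coefp 0)) /eqP.
  rewrite /= -big_filter coef0_prod_one_sub_Xn ?coef0 ?oner_eq0 // all_filter.
  by apply/allP => x /(allP T1) x1; rewrite /= x1 implybT.
have coef_high s :
    (\prod_(x <- s | ~~ (x < m)%N) (1 - 'X^x) : {poly int})`_m = - (count_mem m s)%:R.
  rewrite -big_filter coef_prod_one_sub_Xn //; last first.
    by rewrite all_filter; apply/allP => x _; apply/implyP; rewrite -leqNgt.
  by rewrite count_filter (eq_count (a2 := pred1 m)) // => y /=; case: eqP => // ->; rewrite ltnn.
by apply/eqP; rewrite -(eqr_nat int) -eqr_opp -!coef_high high.
Qed.

Lemma prod_one_sub_Xn_ci n (m : 'I_n -> nat) :
  \prod_(x <- map m (enum 'I_n)) (1 - 'X^x) = (1 - 'X) ^+ n * ci_series m.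
Proof.
rewrite big_map big_enum /=; under eq_bigr do rewrite one_sub_Xn_geom.
by rewrite big_split /= prodr_const card_ord.
Qed.

Lemma shift_factorP (A B : {poly int}) c P :
  A - B = 'X^c * (A - 'X^P * B) <-> A * (1 - 'X^c) = B * (1 - 'X^(c + P)).
Proof.
have E : A * (1 - 'X^c) - B * (1 - 'X^(c + P)) = (A - B) - 'X^c * (A - 'X^P * B).
  by rewrite exprD; ring.
by split => h; apply/eqP; rewrite -subr_eq0 ?E ?h ?subrr // -E h subrr.
Qed.

Section HilbertSeries.
Variables (n : nat) (a p : 'I_n -> nat).
Hypothesis hpa : forall i, (p i < a i)%N.

Local Notation A := (ci_series a).
Local Notation B := (ci_series (fun i => a i - p i)%N).
Local Notation P := (\sum_(i < n) p i)%N.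
Local Notation D := (ci_deg a).
Local Notation H := (hilb_poly a p).

Lemma factor_balancedP c : (0 < c)%N ->
  A * (1 - 'X^c) = B * (1 - 'X^(c + P)) <-> balanced a p c (enum 'I_n).
Proof.
move=> c0; have -> : P = sumn (map p (enum 'I_n)) by rewrite sumnE big_map big_enum.
have prodE (m : 'I_n -> nat) x :
    \prod_(y <- x :: map m (enum 'I_n)) (1 - 'X^y) = (1 - 'X) ^+ n * (ci_series m * (1 - 'X^x)).
  by rewrite big_cons prod_one_sub_Xn_ci mulrC -mulrA.
have pos (m : 'I_n -> nat) x :
    (0 < x)%N -> (forall i, 0 < m i)%N -> all (leq 1) (x :: map m (enum 'I_n)).
  by move=> x0 m0; rewrite /= x0; apply/allP => y /mapP [i _ ->].
have X1 : (1 - 'X : {poly int}) != 0.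
  by apply/eqP => /(congr1 (coefp 0)) /eqP; rewrite /= coefB coef1 coefX coef0.
split => [eqc | /(perm_big _) eqc].
  apply: perm_eq_prod_one_sub_Xn; last by rewrite !prodE eqc.
    by apply: pos => // i; apply: leq_ltn_trans (hpa i).
  by apply: pos => [|i]; rewrite ?addn_gt0 ?c0 ?subn_gt0.
apply: (mulfI (expf_neq0 n X1)); rewrite -!prodE; exact: eqc.
Qed.

Lemma ci_deg_sub : D = (P + ci_deg (fun i => a i - p i))%N.
Proof. by rewrite /ci_deg -big_split; apply: eq_bigr => i _ /=; have := hpa i; lia. Qed.

Lemma recip_hilb_poly : recip D H = A - B.
Proof.
have [_ rA] := recip_ci_series a; have [_ rB] := recip_ci_series (fun i => a i - p i)%N.
by rewrite /hilb_poly recipB rA ci_deg_sub recipXnM rB.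
Qed.

Lemma size_hilb_poly : (size H <= D.+1)%N.
Proof.
have [sA _] := recip_ci_series a; have [sB _] := recip_ci_series (fun i => a i - p i)%N.
apply: leq_trans (size_polyD _ _) _; rewrite size_polyN geq_max sA /=.
by apply: leq_trans (size_polyMleq _ _) _; rewrite size_polyXn addSn /= ci_deg_sub -addnS leq_add2l.
Qed.

Lemma hilb_poly_coef0 : (0 < P)%N -> H`_0 = 1.
Proof.
move=> P_gt0; rewrite coefB coefXnM P_gt0 subr0 ci_series_coef0 // => i.
exact: leq_ltn_trans (hpa i).
Qed.

Lemma hilb_poly_coefD : H`_D = 0.
Proof.
have := congr1 (coefp 0) recip_hilb_poly; rewrite /= coef_recip leq0n subn0 => ->.
rewrite coefB !ci_series_coef0 ?subrr // => i; rewrite ?subn_gt0 //.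
exact: leq_ltn_trans (hpa i).
Qed.

Lemma hilb_poly_eq0 : P = 0%N -> H = 0.
Proof.
move=> P0; rewrite /hilb_poly P0 expr0 mul1r.
have -> : B = A; last exact: subrr.
move/eqP: P0; rewrite sum_nat_eq0 => /forallP p0.
by apply: eq_bigr => i _; rewrite (eqP (p0 i)) subn0.
Qed.

Lemma symmetric_hilb_polyP : (0 < P)%N ->
  symmetric_hilb (hilb a p) <-> exists hi, H = recip hi H.
Proof.
move=> P_gt0; have H0 := hilb_poly_coef0 P_gt0.
have hilb_neq0 d : (hilb a p d != 0)%N = (H`_d != 0) by rewrite -hilb_polyE pnatr_eq0.
rewrite symmetric_hilbP ?hilb_neq0 ?H0 ?oner_eq0 //; last exact: hilb_pred_neq0.
split => -[hi hE]; exists hi.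
  by apply/polyP => k; rewrite coef_recip -!hilb_polyE hE; case: ifP.
move=> k; apply/eqP; rewrite -(eqr_nat int) hilb_polyE {1}hE coef_recip.
by case: ifP => _; rewrite ?hilb_polyE.
Qed.

Lemma palindromic_hilb_polyP : (0 < P)%N ->
  (exists hi, H = recip hi H) <-> exists2 c, (0 < c)%N & A * (1 - 'X^c) = B * (1 - 'X^(c + P)).
Proof.
move=> P_gt0; have H0 := hilb_poly_coef0 P_gt0.
split => [[hi Hhi] | [c c0 /shift_factorP]].
  have Hhi1 : H`_hi = 1 by rewrite {1}Hhi coef_recip leqnn subnn H0.
  have hiD : (hi < D)%N.
    rewrite ltn_neqAle; apply/andP; split.
      by apply/eqP => hiD; move: hilb_poly_coefD; rewrite -hiD Hhi1; apply/eqP; exact: oner_neq0.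
    rewrite -ltnS; apply: leq_trans size_hilb_poly; rewrite ltnNge; apply/negP.
    by move/(nth_default 0); rewrite Hhi1; apply/eqP; exact: oner_neq0.
  exists (D - hi)%N; first by rewrite subn_gt0.
  apply/shift_factorP; rewrite -recip_hilb_poly.
  exact/(recip_shift (ltnW hiD) size_hilb_poly).
rewrite -recip_hilb_poly => Hc.
have cD : (c <= D)%N.
  apply: recip_shift_leq Hc; apply/eqP => H_eq0.
  by move: H0; rewrite H_eq0 coef0; apply/eqP; rewrite eq_sym; exact: oner_neq0.
exists (D - c)%N; apply/(recip_shift (leq_subr c D) size_hilb_poly).
by rewrite subKn.
Qed.

Lemma symmetric_hilb_factorP : symmetric_hilb (hilb a p) <->
  exists2 c, (0 < c)%N & A * (1 - 'X^c) = B * (1 - 'X^(c + P)).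
Proof.
have [P0 | P_gt0] := posnP P; last by rewrite symmetric_hilb_polyP // palindromic_hilb_polyP.
have H_eq0 := hilb_poly_eq0 P0; split => _.
  exists 1%N => //; apply/shift_factorP; rewrite P0 expr0 mul1r.
  by move: H_eq0; rewrite /hilb_poly P0 expr0 mul1r => ->; rewrite mulr0.
by left => d; apply/eqP; rewrite -(eqr_nat int) hilb_polyE H_eq0 coef0.
Qed.

End HilbertSeries.

Local Close Scope ring_scope.

Theorem proposition4p2 (n : nat) (a p : 'I_n -> nat)
  (hpa : forall i, p i < a i) :
  symmetric_hilb (hilb a p) <->
  exists (s : 'S_n) (N : nat), N <= n /\
    (forall i : 'I_n, p (s i) = 0 <-> N <= i) /\
    (forall i0 j : 'I_n, (i0 : nat) = 0 -> j < N ->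
       a (s j) = a (s i0) + \sum_(k < n | 0 < k <= j) p (s k)).
Proof.
rewrite symmetric_hilb_factorP //; split.
  move=> [c c0 /(factor_balancedP hpa c0) /balanced_enumP [l lS ch]].
  exact: permutation_of_chain lS ch.
move=> [s [N [Nn [ps sum_s]]]].
have [c c0 ch] := chain_of_permutation hpa Nn ps sum_s.
by exists c => //; apply/(factor_balancedP hpa c0)/balanced_enumP.
Qed.
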